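(* Let $(\Sigma,\boldsymbol\alpha,\boldsymbol\beta)$ be a Heegaard diagram with $n$ alpha and $n$ beta curves. If $S_{\alpha,\beta}=H_1(\Sigma;\mathbb{Z})$, then $\Pi_{\alpha,\beta}=\Pi_\alpha+\Pi_\beta$.
   Context: $\Sigma$ is a closed oriented surface of genus $g$. A collection $\boldsymbol\alpha=(\alpha_1,\dots,\alpha_n)$ of pairwise disjoint simple closed curves on $\Sigma$ is good if the span $S_\alpha$ of the $[\alpha_i]$ in $H_1(\Sigma;\mathbb{Z})$ has rank $g$; a Heegaard diagram consists of two good collections $\boldsymbol\alpha,\boldsymbol\beta$ of $n$ curves each. $\Pi_\alpha$ is the free abelian group spanned by the closures of the components of $\Sigma-\bigcup\alpha_i$, viewed as 2-chains (similarly $\Pi_\beta$). $\Pi_{\alpha,\beta}$ is the group of periodic domains: integer linear combinations of closures of components of $\Sigma-\bigcup\alpha_i-\bigcup\beta_i$ whose boundary is an integer linear combination of the alpha and beta curves; $\Pi_\alpha,\Pi_\beta$ are regarded as subgroups of $\Pi_{\alpha,\beta}$. $S_{\alpha,\beta}=S_\alpha+S_\beta$. *)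

(* A closed, connected, oriented surface Sigma is given as an oriented
   combinatorial map (2-cell embedded graph): a finite set of darts D,
   a fixed-point-free involution e (the two halves of an edge) and a
   permutation s (rotation of darts around their tail vertex).
   Vertices = s-orbits, edges = e-orbits, faces = orbits of phi := s \o e
   (consecutive darts d, phi d along a face boundary: head d = tail (phi d)).
   Curves are simple edge-cycles in the 1-skeleton (any finite system of
   simple closed curves can be isotoped into the 1-skeleton of a suitable
   cell structure).

   Cellular chains with integer coefficients:
   - 1-chains: functions z : D -> int, with z (e d) = - z d (value on the
     oriented edge d);
   - 2-chains: functions w : D -> int constant on faces (w d = coefficient of
     the face to the left of d); boundary  (bdry2 w) d = w d - w (e d). *)
From HB Require Import structures.
From mathcomp Require Import all_boot all_order all_algebra.
Set Implicit Arguments. Unset Strict Implicit. Unset Printing Implicit Defensive.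
Import GRing.Theory Num.Theory.
Local Open Scope ring_scope.

Section HeegaardDefs.
Variables (D : finType) (e s : D -> D).

Definition phi (d : D) : D := s (e d).

(* (D, e, s) is a closed connected oriented surface of genus g:
   Euler characteristic V - E + F = 2 - 2g, with E = #|D|/2. *)
Definition is_surface (g : nat) : Prop :=
  [/\ (0 < #|D|)%N, involutive e, (forall d, e d != d), injective s
    & (forall x y, connect (fun a b => (b == s a) || (b == e a)) x y)] /\
  ((fcard s (mem (@predT D)) + fcard phi (mem (@predT D)) + 2 * g) * 2
         = #|D| + 4)%N.

Definition same_vertex (x y : D) : bool := fconnect s x y.

(* a simple closed curve: a nonempty cyclic edge path d_1 ... d_k
   (head d_i = tail d_(i+1) cyclically) visiting pairwise distinct
   vertices and using pairwise distinct edges *)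
Definition simple_closed_curve (c : seq D) : Prop :=
  [/\ c != [::],
      cycle (fun x y => same_vertex (e x) y) c,
      pairwise (fun x y => ~~ same_vertex x y) c
    & pairwise (fun x y => y != e x) c].

Definition curve_chain (c : seq D) (d : D) : int :=
  (count_mem d c)%:Z - (count_mem (e d) c)%:Z.

Definition comb n (cs : 'I_n -> seq D) (a : 'I_n -> int) (d : D) : int :=
  \sum_(i < n) a i * curve_chain (cs i) d.

Definition two_chain (w : D -> int) : Prop := forall d, w (phi d) = w d.

Definition bdry2 (w : D -> int) (d : D) : int := w d - w (e d).

Definition one_cycle (z : D -> int) : Prop :=
  (forall d, z (e d) = - z d) /\
  (forall d, \sum_(x | same_vertex d x) z x = 0).

Definition null_homologous (z : D -> int) : Prop :=
  exists w, two_chain w /\ forall d, z d = bdry2 w d.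

(* k elements of S_cs (given by coefficient vectors A j) whose classes
   in H_1(Sigma;Z) are Z-linearly independent *)
Definition indep_in_H1 n (cs : 'I_n -> seq D) k (A : 'I_k -> 'I_n -> int)
  : Prop :=
  forall c : 'I_k -> int,
    null_homologous (fun d => \sum_(j < k) c j * comb cs (A j) d) ->
    forall j, c j = 0.

Definition span_rank n (cs : 'I_n -> seq D) (r : nat) : Prop :=
  (exists A : 'I_r -> 'I_n -> int, indep_in_H1 cs A) /\
  (forall A : 'I_r.+1 -> 'I_n -> int, ~ indep_in_H1 cs A).

Definition good_collection (g n : nat) (cs : 'I_n -> seq D) : Prop :=
  [/\ forall i, simple_closed_curve (cs i),
      (forall i j, i != j -> forall x y, x \in cs i -> y \in cs j ->
          ~~ same_vertex x y)
    & span_rank cs g].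

Definition spans_H1 n (al be : 'I_n -> seq D) : Prop :=
  forall z, one_cycle z ->
    exists a b, null_homologous (fun d => z d - comb al a d - comb be b d).

Definition on_curves n (cs : 'I_n -> seq D) (d : D) : bool :=
  [exists i, (d \in cs i) || (e d \in cs i)].

Definition region_adj (C : pred D) : rel D :=
  fun x y => (y == phi x) || ((y == e x) && ~~ C x).

(* w is an integer combination of the closures of the components of
   Sigma - C (each component R, with representative root, contributes
   the 2-chain 1_R with coefficient c R) *)
Definition in_Pi (C : pred D) (w : D -> int) : Prop :=
  exists c : D -> int, forall d, w d = c (fingraph.root (region_adj C) d).

Definition periodic_domain n (al be : 'I_n -> seq D) (w : D -> int) : Prop :=
  in_Pi (fun d => on_curves al d || on_curves be d) w /\
  exists a b, forall d, bdry2 w d = comb al a d + comb be b d.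

End HeegaardDefs.

(* If [w] is a periodic domain with [∂w = Σ a_i α_i + Σ b_j β_j], the 1-cycle
   [Σ a_i α_i + Σ b_j β_j] is null-homologous.  An Euler characteristic count
   shows that rational homology has dimension at least [2g]; it is spanned by
   [S_α] and [S_β], each of rank [g], so they meet trivially and [Σ a_i α_i] is
   already a rational boundary.  As [H_1] of a closed connected surface is
   torsion free, [Σ a_i α_i = ∂w_1] for an integral 2-chain [w_1].  A 2-chain
   whose boundary lies on the alpha curves is constant on the components of
   [Σ - α], so [w_1 ∈ Π_α], and likewise [w - w_1 ∈ Π_β]. *)

From HB Require Import structures.
From mathcomp Require Import all_boot all_order all_algebra.
From mathcomp Require Import zify.
From Stdlib Require Import Classical_Prop.
Set Implicit Arguments. Unset Strict Implicit. Unset Printing Implicit Defensive.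
Import GRing.Theory Num.Theory.
Local Open Scope ring_scope.

Section Regions.
Variables (D : finType) (e s : D -> D).
Hypotheses (eK : involutive e) (s_inj : injective s).

Lemma phi_inj : injective (phi e s).
Proof. by move=> x y; rewrite /phi => /s_inj /(can_inj eK). Qed.

Lemma phi_e d : phi e s (e d) = s d.
Proof. by rewrite /phi eK. Qed.

Variable C : pred D.
Hypothesis C_e : forall d, C (e d) = C d.

Local Notation adj := (region_adj e s C).

Lemma region_adj_sym : connect_sym adj.
Proof.
have adj_rev x y : adj x y -> connect adj y x.
  case/orP=> [/eqP->|/andP[/eqP-> nCx]]; last first.
    by apply: connect1; rewrite /region_adj eK eqxx C_e nCx orbT.
  have : fconnect (phi e s) (phi e s x) x by rewrite fconnect_sym ?fconnect1 //; exact: phi_inj.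
  by apply: connect_sub => a b /eqP <-; apply: connect1; rewrite /region_adj eqxx.
suff connect_rev x y : connect adj x y -> connect adj y x.
  by move=> x y; apply/idP/idP => /connect_rev.
case/connectP=> p; elim: p x => [|z p IH] x /=; first by move=> _ ->.
by case/andP=> /adj_rev zx /IH h /h yz; exact: connect_trans yz zx.
Qed.

Definition region_const (w : D -> int) := forall x y, adj x y -> w x = w y.

Lemma region_const_connect w x y : region_const w -> connect adj x y -> w x = w y.
Proof.
move=> hw /connectP[p]; elim: p x => [|z p IH] x /=; first by move=> _ ->.
by case/andP=> xz pz yeq; rewrite (hw _ _ xz) (IH _ pz yeq).
Qed.

Lemma in_PiP w : in_Pi e s C w <-> region_const w.
Proof.
split=> [[c hc] x y xy|hw]; last first.
  by exists w => d; apply: region_const_connect (connect_root _ _).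
rewrite !hc; congr c; apply/eqP.
by rewrite root_connect ?connect1 //; exact: region_adj_sym.
Qed.

Lemma region_constP w :
  region_const w <->
  (forall d, w (phi e s d) = w d) /\ (forall d, ~~ C d -> w (e d) = w d).
Proof.
split=> [hw|[w_phi w_e] x y /orP[/eqP->|/andP[/eqP-> nCx]]]; rewrite ?w_phi ?w_e //.
by split=> [d|d nCd]; symmetry; apply: hw; rewrite /region_adj eqxx ?nCd ?orbT.
Qed.

End Regions.

Lemma pairwise_mem (T : eqType) (r : rel T) c x y :
  pairwise r c -> x \in c -> y \in c -> x != y -> r x y || r y x.
Proof.
move=> pw xc yc nxy; pose r' := [rel a b | [|| a == b, r a b | r b a]].
have r'_refl : reflexive r' by move=> a; rewrite /= eqxx.
have r'_sym : symmetric r' by move=> a b /=; rewrite eq_sym [r b a || _]orbC.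
have : all2rel r' c.
  by rewrite -pairwise_all2rel //; apply: sub_pairwise pw => a b rab; rewrite /= rab orbT.
by move/allrelP/(_ x y xc yc); rewrite /= (negbTE nxy).
Qed.

Lemma eq_in_next (T : eqType) (R : Type) (c : seq T) (f : T -> R) :
  uniq c -> {in c, forall x, f (next c x) = f x} -> {in c &, forall x y, f x = f y}.
Proof.
case: c => [//|y0 c'] uc f_next.
have f_nth p : (p < size (y0 :: c'))%N -> f (nth y0 (y0 :: c') p) = f y0.
  elim: p => [//|p IH] hp; have hp' := ltnW hp.
  rewrite -(IH hp') -[RHS]f_next ?mem_nth //.
  by rewrite next_nth mem_nth // index_uniq.
suff f_y0 x : x \in y0 :: c' -> f x = f y0 by move=> x y /f_y0-> /f_y0->.
by move=> xc; rewrite -(nth_index y0 xc) f_nth ?index_mem.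
Qed.

Section Curves.
Variables (D : finType) (e s : D -> D).
Hypotheses (eK : involutive e) (e_fp : forall d, e d != d) (s_inj : injective s).
Variables (n : nat) (cs : 'I_n -> seq D).
Hypotheses (cs_simple : forall i, simple_closed_curve e s (cs i))
  (cs_disjoint : forall i j, i != j -> forall x y, x \in cs i -> y \in cs j ->
     ~~ same_vertex s x y).

Local Notation sv := (same_vertex s).
Local Notation C := (on_curves e cs).

Lemma same_vertex_refl x : sv x x. Proof. exact: connect0. Qed.
Lemma same_vertex_sym x y : sv x y = sv y x. Proof. exact: fconnect_sym. Qed.

Lemma curve_uniq i : uniq (cs i).
Proof.
case: (cs_simple i) => _ _ pw _.
by apply: pairwise_uniq pw => x /=; rewrite same_vertex_refl.
Qed.

Lemma curve_same_vertex i x y : x \in cs i -> y \in cs i -> sv x y -> x = y.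
Proof.
case: (cs_simple i) => _ _ pw _ xc yc sxy; apply/eqP/negPn/negP => nxy.
by have := pairwise_mem pw xc yc nxy; rewrite /= sxy same_vertex_sym sxy.
Qed.

Lemma curve_e_notin i x : x \in cs i -> e x \notin cs i.
Proof.
case: (cs_simple i) => _ _ _ pw xc; apply/negP => exc.
have nxy : x != e x by rewrite eq_sym e_fp.
by have := pairwise_mem pw xc exc nxy; rewrite /= eqxx eK eqxx.
Qed.

Lemma same_vertex_next i x : x \in cs i -> sv (e x) (next (cs i) x).
Proof. by case: (cs_simple i) => _ cyc _ _ xc; exact: (next_cycle cyc xc). Qed.

Lemma curves_notin i j x : x \in cs i -> j != i -> x \notin cs j.
Proof.
by move=> xi ji; apply/negP => xj; have := cs_disjoint ji xj xi; rewrite same_vertex_refl.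
Qed.

Lemma curves_e_notin i j x : x \in cs i -> j != i -> e x \notin cs j.
Proof.
move=> xi ji; apply/negP => exj.
have := cs_disjoint ji exj (_ : next (cs i) x \in cs i).
by rewrite mem_next same_vertex_next //; move/(_ xi).
Qed.

Lemma on_curves_e d : C (e d) = C d.
Proof.
by apply/existsP/existsP=> [[j hj]|[j hj]]; exists j; rewrite eK orbC in hj *.
Qed.

(* Curves are disjoint and pass through each vertex at most once. *)
Lemma on_curves_at_next i x z : x \in cs i -> C z -> sv z (next (cs i) x) ->
  z = next (cs i) x \/ z = e x.
Proof.
move=> xi /existsP[j hj] hsv; set y := next (cs i) x in hsv *.
have yi : y \in cs i by rewrite mem_next.
case/orP: hj => [zj|ezj].
  have [ji|ji] := eqVneq j i; last by have := cs_disjoint ji zj yi; rewrite hsv.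
  by left; apply: (@curve_same_vertex i) => //; rewrite -ji.
set u := next (cs j) (e z).
have uj : u \in cs j by rewrite mem_next.
have suy : sv u y.
  have szu : sv z u by rewrite -[z in sv z _]eK; exact: same_vertex_next.
  by rewrite same_vertex_sym in szu; exact: connect_trans szu hsv.
have [ji|ji] := eqVneq j i; last by have := cs_disjoint ji uj yi; rewrite suy.
subst j; right.
have uy : u = y by apply: (@curve_same_vertex i).
have : prev (cs i) u = prev (cs i) y by rewrite uy.
by rewrite !prev_next ?curve_uniq // => <-; rewrite eK.
Qed.

Lemma rotation_off_curves i x t u : x \in cs i ->
  t \in [:: next (cs i) x; e x] -> u \in [:: next (cs i) x; e x] -> t != u ->
  fconnect s t u -> forall k, (0 < k < findex s t u)%N -> ~~ C (iter k s t).
Proof.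
move=> xi ht hu ntu tu k /andP[k0 ku]; apply/negP => Ck.
have k_ord : (k < order s t)%N by apply: ltn_trans ku (findex_max tu).
have t_sv : sv t (next (cs i) x).
  by move: ht; rewrite !inE => /orP[]/eqP->; rewrite ?same_vertex_refl ?same_vertex_next.
have k_sv : sv (iter k s t) (next (cs i) x).
  have := fconnect_iter s k t; rewrite -/(sv _ _) same_vertex_sym => kt.
  exact: connect_trans kt t_sv.
have k_idx := findex_iter k_ord.
have kt : iter k s t != t by apply: contraTneq k0 => h; rewrite -k_idx h findex0.
have ku' : iter k s t != u by apply: contraTneq ku => h; rewrite -{1}k_idx h ltnn.
have k_in : iter k s t \in [:: next (cs i) x; e x].
  by rewrite !inE; case: (on_curves_at_next xi Ck k_sv) => ->; rewrite eqxx ?orbT.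
move: ht hu k_in kt ku' ntu; rewrite !inE.
by do 3!case/orP=> /eqP->; rewrite ?eqxx.
Qed.

Section RegionConstant.
Variable W : D -> int.
Hypotheses (W_phi : forall d, W (phi e s d) = W d)
  (W_off : forall d, ~~ C d -> W (e d) = W d).

Lemma region_const_s d : W (s d) = W (e d).
Proof. by rewrite -(phi_e s eK) W_phi. Qed.

Lemma region_const_rotation t k :
  (forall j, (0 < j < k)%N -> ~~ C (iter j s t)) -> (0 < k)%N ->
  W (iter k s t) = W (s t).
Proof.
elim: k => [//|[//|k] IH] off _.
rewrite iterS region_const_s W_off; last by apply: off; rewrite /= ltnS leqnn.
by apply: IH => // j /andP[j0 jk]; apply: off; rewrite j0 ltnW.
Qed.

Lemma bdry2_next i x : x \in cs i -> bdry2 e W (next (cs i) x) = bdry2 e W x.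
Proof.
move=> xi; set y := next (cs i) x.
have yi : y \in cs i by rewrite mem_next.
have yex : y != e x by apply: contraTneq (curve_e_notin xi) => <-; rewrite negbK.
have rotate t u : t \in [:: y; e x] -> u \in [:: y; e x] -> t != u -> fconnect s t u ->
    W u = W (s t).
  move=> ht hu ntu tu; rewrite -{1}(iter_findex tu).
  apply: region_const_rotation; first exact: rotation_off_curves ht hu ntu tu.
  by rewrite lt0n findex_eq0.
have W_y : W y = W x.
  by rewrite (rotate (e x)) ?inE ?eqxx ?orbT 1?eq_sym // ?W_phi //; exact: same_vertex_next.
have W_ex : W (e x) = W (e y).
  rewrite (rotate y) ?inE ?eqxx ?orbT ?region_const_s //.
  by rewrite -/(sv _ _) same_vertex_sym; exact: same_vertex_next.
by rewrite /bdry2 W_y -W_ex.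
Qed.

Lemma bdry2_on_curve i : {in cs i &, forall x y, bdry2 e W x = bdry2 e W y}.
Proof. by apply: eq_in_next (curve_uniq i) _ => x; exact: bdry2_next. Qed.

End RegionConstant.

Lemma curve_chain_in i x : x \in cs i -> curve_chain e (cs i) x = 1.
Proof.
move=> xi; rewrite /curve_chain count_uniq_mem ?curve_uniq // xi.
by rewrite (count_memPn (curve_e_notin xi)).
Qed.

Lemma curve_chain_other i j x : x \in cs i -> j != i -> curve_chain e (cs j) x = 0.
Proof.
move=> xi ji; rewrite /curve_chain (count_memPn (curves_notin xi ji)).
by rewrite (count_memPn (curves_e_notin xi ji)).
Qed.

Lemma comb_in a i x : x \in cs i -> comb e cs a x = a i.
Proof.
move=> xi; rewrite /comb (bigD1 i) //= curve_chain_in // mulr1 big1 ?addr0 // => j ji.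
by rewrite (curve_chain_other xi ji) mulr0.
Qed.

Lemma comb_e a d : comb e cs a (e d) = - comb e cs a d.
Proof.
rewrite /comb -sumrN; apply: eq_bigr => j _.
by rewrite /curve_chain eK -mulrN opprB.
Qed.

Lemma comb_off a d : ~~ C d -> comb e cs a d = 0.
Proof.
move/existsPn => off; rewrite /comb big1 // => j _.
have := off j; rewrite negb_or => /andP[nd ned].
by rewrite /curve_chain (count_memPn nd) (count_memPn ned) mulr0.
Qed.

Lemma region_const_bdry2 W :
  region_const e s C W -> exists a, forall d, bdry2 e W d = comb e cs a d.
Proof.
case/region_constP=> W_phi W_off.
exists (fun i => if cs i is y0 :: _ then bdry2 e W y0 else 0).
have bdry_in i x : x \in cs i -> bdry2 e W x = if cs i is y0 :: _ then bdry2 e W y0 else 0.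
  case ci: (cs i) => [//|y0 c'] xi.
  by apply: (bdry2_on_curve W_phi W_off (i := i)); rewrite ci // mem_head.
move=> d; case: (boolP (C d)) => [/existsP[j /orP[dj|edj]]|nCd].
- by rewrite (comb_in _ dj) (bdry_in _ _ dj).
- rewrite -[d in comb _ _ _ d]eK comb_e (comb_in _ edj) -(bdry_in _ _ edj).
  by rewrite /bdry2 eK opprB.
- by rewrite comb_off // /bdry2 W_off ?subrr.
Qed.

Lemma bdry2_comb_region_const W a : two_chain e s W ->
  (forall d, bdry2 e W d = comb e cs a d) -> region_const e s C W.
Proof.
move=> W_phi W_bdry; apply/region_constP; split => // d nCd.
by have := W_bdry d; rewrite comb_off // /bdry2 => /eqP; rewrite subr_eq0 => /eqP.
Qed.

End Curves.

Lemma card_roots_involution (D : finType) (e : D -> D) :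
  involutive e -> (forall d, e d != d) -> (2 * #|roots (frel e)| <= #|D|)%N.
Proof.
move=> eK e_fp; have e_inj := can_inj eK.
have e_sym : connect_sym (frel e) by move=> x y; exact: fconnect_sym.
set R := [set d | roots (frel e) d].
have R_disj : R :&: (e @: R) = set0.
  apply/setP => x; rewrite !inE; apply/negP => /andP[xr /imsetP[r rr xe]].
  rewrite inE in rr; move/eqP: xr; rewrite xe.
  have -> : froot e (e r) = froot e r.
    by apply/eqP; rewrite (root_connect e_sym) fconnect_sym // fconnect1.
  by move/eqP: rr => -> /eqP; rewrite eq_sym (negbTE (e_fp r)).
have R_card : #|R| = #|roots (frel e)| by rewrite cardsE.
have := cardsUI R (e @: R); rewrite R_disj cards0 addn0 card_imset //.
by have := subset_leq_card (subsetT (R :|: e @: R)); rewrite cardsT; lia.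
Qed.

Section CoordinateSpaces.
Variables (R : numFieldType) (D : finType).

Local Notation N := #|D|.

Definition sel_mx m (g : 'I_m -> D) : 'M[R]_(N, m) :=
  \matrix_(i, j) (enum_val i == g j)%:R.

Lemma sel_mxE m (g : 'I_m -> D) (v : 'rV[R]_N) j :
  (v *m sel_mx g) 0 j = v 0 (enum_rank (g j)).
Proof.
rewrite !mxE (bigD1 (enum_rank (g j))) //= mxE enum_rankK eqxx mulr1.
rewrite big1 ?addr0 // => i ne; rewrite mxE; case: eqP => [h|]; last by rewrite mulr0.
by rewrite -h enum_valK eqxx in ne.
Qed.

Definition comp_mx (f : D -> D) : 'M[R]_N := sel_mx (fun j => f (enum_val j)).

Lemma comp_mxE f (v : 'rV[R]_N) d :
  (v *m comp_mx f) 0 (enum_rank d) = v 0 (enum_rank (f d)).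
Proof. by rewrite sel_mxE enum_rankK. Qed.

Lemma comp_mx_diffE f (v : 'rV[R]_N) d :
  (v *m (1%:M - comp_mx f)) 0 (enum_rank d) = v 0 (enum_rank d) - v 0 (enum_rank (f d)).
Proof. by rewrite mulmxBr mulmx1 [LHS]mxE [X in _ + X]mxE comp_mxE. Qed.

Lemma comp_mxM f h : comp_mx f *m comp_mx h = comp_mx (f \o h).
Proof.
apply/row_matrixP => i; apply/rowP => j.
rewrite row_mul -(enum_valK j) comp_mxE.
by rewrite !mxE !enum_rankK.
Qed.

Definition fixed_space f := kermx (1%:M - comp_mx f).

Lemma fixed_spaceP (v : 'rV[R]_N) f :
  reflect (forall d, v 0 (enum_rank (f d)) = v 0 (enum_rank d)) (v <= fixed_space f)%MS.
Proof.
apply: (iffP sub_kermxP) => [|v_fix]; rewrite mulmxBr mulmx1.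
  by move/subr0_eq => v_eq d; rewrite -comp_mxE -v_eq.
suff -> : v *m comp_mx f = v by rewrite subrr.
by apply/rowP => j; rewrite -(enum_valK j) comp_mxE v_fix.
Qed.

Lemma fixed_space_fconnect (v : 'rV[R]_N) f x y :
  (v <= fixed_space f)%MS -> fconnect f x y -> v 0 (enum_rank x) = v 0 (enum_rank y).
Proof.
move/fixed_spaceP=> v_fix /iter_findex <-.
by elim: (findex f x y) => [|k IH] //=; rewrite v_fix.
Qed.

Lemma mxrank_mul_inj m p (A : 'M[R]_(m, N)) (B : 'M[R]_(N, p)) :
  (forall v : 'rV[R]_N, (v <= A)%MS -> v *m B = 0 -> v = 0) ->
  \rank (A *m B) = \rank A.
Proof.
move=> B_inj; rewrite -(mxrank_mul_ker A B) -[LHS]addn0; congr (_ + _)%N.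
apply/esym/eqP; rewrite mxrank_eq0; apply/eqP/row_matrixP => i; rewrite row0.
apply: B_inj; first exact: submx_trans (row_sub i _) (capmxSl _ _).
by apply/sub_kermxP; exact: submx_trans (row_sub i _) (capmxSr _ _).
Qed.

(* An [f]-invariant vector is determined by its values on the roots of the [f]-orbits. *)
Lemma rank_fixed_space f : injective f -> (\rank (fixed_space f) <= #|roots (frel f)|)%N.
Proof.
move=> f_inj; pose Sel := sel_mx (@enum_val _ (roots (frel f))).
rewrite -(@mxrank_mul_inj _ _ _ Sel) ?rank_leq_col // => v v_fix vSel0.
apply/rowP => j; rewrite mxE -(enum_valK j).
rewrite (fixed_space_fconnect v_fix (y := froot f (enum_val j))); last first.
  exact: connect_root.
have r_root : froot f (enum_val j) \in roots (frel f).
  by apply: roots_root => x y; exact: fconnect_sym.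
by rewrite -(enum_rankK_in r_root r_root) -sel_mxE vSel0 mxE.
Qed.

Lemma const_fixed_space f : ((const_mx 1 : 'rV[R]_N) <= fixed_space f)%MS.
Proof. by apply/fixed_spaceP => d; rewrite !mxE. Qed.

Section SurfaceChains.
Variables (e s : D -> D).
Hypotheses (eK : involutive e) (e_fp : forall d, e d != d) (s_inj : injective s).

Definition anti_space := kermx (1%:M + comp_mx e).

Lemma anti_space_e (v : 'rV[R]_N) d :
  (v <= anti_space)%MS -> v 0 (enum_rank (e d)) = - v 0 (enum_rank d).
Proof.
move/sub_kermxP; rewrite mulmxDr mulmx1 => /(congr1 (fun u : 'rV[R]_N => u 0 (enum_rank d))).
by rewrite [X in X = _]mxE comp_mxE mxE addrC => /eqP; rewrite addr_eq0 => /eqP.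
Qed.

Lemma anti_space_sum (v : 'rV[R]_N) : (v <= anti_space)%MS -> \sum_j v 0 j = 0.
Proof.
move=> v_anti; have : \sum_j v 0 j = - \sum_j v 0 j.
  rewrite -sumrN (reindex (fun j : 'I_N => enum_rank (e (enum_val j)))) /=; last first.
    by exists (fun j => enum_rank (e (enum_val j))) => j _; rewrite enum_rankK eK enum_valK.
  by apply: eq_bigr => j _; rewrite anti_space_e // enum_valK.
by move/eqP; rewrite -subr_eq0 opprK -mulr2n mulrn_eq0 => /eqP.
Qed.

Lemma rank_anti_space : (N <= \rank anti_space + #|roots (frel e)|)%N.
Proof.
have : ((1%:M + comp_mx e)%R <= fixed_space e)%MS.
  apply/sub_kermxP; rewrite mulmxDl mul1mx mulmxBr mulmx1 comp_mxM.
  have -> : comp_mx (e \o e) = 1%:M.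
    by apply/matrixP => i j; rewrite !mxE /= eK (inj_eq (can_inj enum_valK)).
  by rewrite addrA subrK subrr.
move/mxrankS/leq_trans/(_ (rank_fixed_space (can_inj eK))).
by rewrite /anti_space mxrank_ker; have := rank_leq_row (1%:M + comp_mx e : 'M[R]_N); lia.
Qed.

Definition vertex_mx : 'M[R]_N :=
  \matrix_(i, j) (same_vertex s (enum_val j) (enum_val i))%:R.

Lemma vertex_mxE (v : 'rV[R]_N) d :
  (v *m vertex_mx) 0 (enum_rank d) = \sum_(x | same_vertex s d x) v 0 (enum_rank x).
Proof.
rewrite mxE (reindex enum_rank) /=; last first.
  by exists enum_val => [x _|i _]; rewrite ?enum_rankK ?enum_valK.
rewrite [RHS]big_mkcond /=; apply: eq_bigr => x _; rewrite mxE !enum_rankK.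
by case: ifP; rewrite ?mulr1 ?mulr0.
Qed.

Lemma vertex_mx_fixed : (vertex_mx <= fixed_space s)%MS.
Proof.
apply/row_subP => i; apply/fixed_spaceP => d; rewrite !mxE !enum_rankK.
by rewrite /same_vertex -(same_fconnect1 s_inj).
Qed.

(* Each dart lies at exactly one vertex, represented by the root of its [s]-orbit. *)
Lemma vertex_mx_sum_roots (v : 'rV[R]_N) :
  \sum_(r | roots (frel s) r) (v *m vertex_mx) 0 (enum_rank r) = \sum_j v 0 j.
Proof.
have s_sym : connect_sym (frel s) by move=> x y; exact: fconnect_sym.
rewrite [RHS](reindex enum_rank) /=; last first.
  by exists enum_val => [x _|i _]; rewrite ?enum_rankK ?enum_valK.
rewrite [RHS](partition_big (froot s) (roots (frel s))) => [|x _]; last exact: roots_root.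
apply: eq_bigr => r /eqP r_root; rewrite vertex_mxE; apply: eq_bigl => x /=.
by rewrite -{2}r_root (root_connect s_sym) /same_vertex s_sym.
Qed.

Lemma anti_vertex_ltmx : (0 < N)%N -> (anti_space *m vertex_mx < fixed_space s)%MS.
Proof.
case/card_gt0P=> d0 _.
rewrite ltmxE (submx_trans (submxMl _ _) vertex_mx_fixed) /=.
apply/negP => /(submx_trans (const_fixed_space s))/submxP[w one_eq].
have := congr1 (fun u : 'rV[R]_N => \sum_(r | roots (frel s) r) u 0 (enum_rank r)) one_eq.
rewrite /= mulmxA vertex_mx_sum_roots anti_space_sum ?submxMl //.
under eq_bigr do rewrite mxE.
rewrite sumr_const => /eqP; apply/negP; rewrite pnatr_eq0 -lt0n.
by apply/card_gt0P; exists (froot s d0); apply: roots_root => x y; exact: fconnect_sym.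
Qed.

Definition cycle_space := (anti_space :&: kermx vertex_mx)%MS.

Definition bdry_space := fixed_space (phi e s) *m (1%:M - comp_mx e).

Lemma rank_cycle_space : (0 < N)%N ->
  (\rank anti_space < \rank cycle_space + #|roots (frel s)|)%N.
Proof.
move=> N_gt0; rewrite -(mxrank_mul_ker anti_space vertex_mx) addnC ltn_add2l.
exact: leq_trans (rank_ltmx (anti_vertex_ltmx N_gt0)) (rank_fixed_space s_inj).
Qed.

Lemma rank_bdry_space : (0 < N)%N -> (\rank bdry_space < \rank (fixed_space (phi e s)))%N.
Proof.
case/card_gt0P=> d0 _.
rewrite -[X in (_ < X)%N](mxrank_mul_ker _ (1%:M - comp_mx e)) -/bdry_space.
have one_ker : ((const_mx 1 : 'rV[R]_N) <=
                 fixed_space (phi e s) :&: kermx (1%:M - comp_mx e))%MS.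
  by rewrite sub_capmx const_fixed_space; exact: (const_fixed_space e).
have one_neq0 : const_mx 1 != 0 :> 'rV[R]_N.
  by apply/eqP => /(congr1 (fun u : 'rV[R]_N => u 0 (enum_rank d0))) /eqP; rewrite !mxE oner_eq0.
by have := mxrankS one_ker; rewrite rank_rV one_neq0; lia.
Qed.

Lemma rank_homology g : (0 < N)%N ->
  ((fcard s (mem (@predT D)) + fcard (phi e s) (mem (@predT D)) + 2 * g) * 2 = N + 4)%N ->
  (2 * g <= \rank (cycle_space *m cokermx bdry_space))%N.
Proof.
have fcardE f : fcard f (mem (@predT D)) = #|roots (frel f)|.
  by apply: eq_card => x; rewrite !inE andbT.
move=> N_gt0; rewrite !fcardE => euler.
have cycle_homology : (\rank cycle_space <=
    \rank (cycle_space *m cokermx bdry_space) + \rank bdry_space)%N.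
  rewrite -{1}(mxrank_mul_ker cycle_space (cokermx bdry_space)) leq_add2l mxrankS //.
  by apply: submx_trans (capmxSr _ _) _; rewrite submxE mulmx_ker.
have := card_roots_involution eK e_fp.
have := rank_anti_space; have := rank_cycle_space N_gt0.
have := rank_bdry_space N_gt0; have := rank_fixed_space (phi_inj eK s_inj).
lia.
Qed.

End SurfaceChains.
End CoordinateSpaces.

Section IntegerChains.
Variables (D : finType) (e s : D -> D).
Hypotheses (eK : involutive e)
  (connected : forall x y, connect (fun a b => (b == s a) || (b == e a)) x y).

Local Notation N := #|D|.

Definition int_row (z : D -> int) : 'rV[rat]_N := \row_j (z (enum_val j))%:~R.

Lemma int_rowE z d : int_row z 0 (enum_rank d) = (z d)%:~R.
Proof. by rewrite mxE enum_rankK. Qed.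

Lemma int_rowD (z1 z2 : D -> int) : int_row (fun d => z1 d + z2 d) = int_row z1 + int_row z2.
Proof. by apply/rowP => j; rewrite !mxE intrD. Qed.

Lemma int_rowB (z1 z2 : D -> int) : int_row (fun d => z1 d - z2 d) = int_row z1 - int_row z2.
Proof. by apply/rowP => j; rewrite !mxE intrB. Qed.

Lemma int_row_sum m (c : 'I_m -> int) (F : 'I_m -> D -> int) :
  int_row (fun d => \sum_(j < m) c j * F j d) = \sum_(j < m) (c j)%:~R *: int_row (F j).
Proof.
apply/rowP => k; rewrite summxE mxE rmorph_sum.
by apply: eq_bigr => j _; rewrite !mxE rmorphM.
Qed.

Lemma null_homologous_bdry_space z :
  null_homologous e s z -> (int_row z <= bdry_space rat e s)%MS.
Proof.
case=> w [w_phi z_bdry].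
have -> : int_row z = int_row w *m (1%:M - comp_mx _ e).
  apply/rowP => j; rewrite -(enum_valK j) comp_mx_diffE.
  by rewrite !int_rowE z_bdry /bdry2 intrB.
by apply: submxMr; apply/fixed_spaceP => d; rewrite !int_rowE w_phi.
Qed.

Lemma clear_denominators (u : 'rV[rat]_N) : exists k : int, k != 0 /\
  exists w : D -> int, forall d, (w d)%:~R = k%:~R * u 0 (enum_rank d).
Proof.
exists (\prod_j denq (u 0 j)); split; first by apply/prodf_neq0 => j _; exact: denq_neq0.
exists (fun d => numq (u 0 (enum_rank d)) * \prod_(j | j != enum_rank d) denq (u 0 j)) => d.
by rewrite [in RHS](bigD1 (enum_rank d)) //= !intrM numqE [RHS]mulrC mulrA.
Qed.

(* H_1 of a connected closed surface is torsion free: if [k z = ∂ w], then [w]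
   is constant modulo [k] (its jumps across edges are multiples of [k]). *)
Lemma null_homologous_div k z : k != 0 ->
  null_homologous e s (fun d => k * z d) -> null_homologous e s z.
Proof.
move=> k_neq0 [w [w_phi w_bdry]].
have [d0 _ | D_empty] := pickP (@predT D); last first.
  by exists (fun _ => 0); split => // d; have := D_empty d.
have w_step x y : (y == s x) || (y == e x) -> (k %| w y - w x)%Z.
  have w_e : (k %| w (e x) - w x)%Z.
    by rewrite -opprB -/(bdry2 e w x) -w_bdry rpredN dvdz_mulr.
  by case/orP => /eqP ->; rewrite // -(phi_e s eK) w_phi.
have w_mod d : (k %| w d - w d0)%Z.
  have /connectP[p p_path ->] := connected d0 d.
  elim/last_ind: p p_path => [|p y IH] /=; first by rewrite subrr dvdz0.
  rewrite rcons_path last_rcons => /andP[p_path p_y].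
  by rewrite -(subrK (w (last d0 p)) (w y)) -addrA rpredD ?IH ?w_step.
exists (fun d => ((w d - w d0) %/ k)%Z); split => [d|d]; first by rewrite w_phi.
apply: (mulfI k_neq0); rewrite w_bdry /bdry2 mulrBr ![k * _]mulrC !divzK ?w_mod //.
by rewrite opprB addrA subrK.
Qed.

Lemma bdry_space_null_homologous z :
  (int_row z <= bdry_space rat e s)%MS -> null_homologous e s z.
Proof.
case/submxP => X z_eq; set u := X *m fixed_space rat (phi e s).
have /fixed_spaceP u_phi : (u <= fixed_space rat (phi e s))%MS by exact: submxMl.
have z_u d : (z d)%:~R = u 0 (enum_rank d) - u 0 (enum_rank (e d)).
  by rewrite -int_rowE z_eq mulmxA comp_mx_diffE.
have [k [k_neq0 [w w_eq]]] := clear_denominators u.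
apply: (null_homologous_div k_neq0); exists w; split => d; apply: (@intr_inj rat).
  by rewrite !w_eq u_phi.
by rewrite /bdry2 intrM intrB !w_eq z_u mulrBr.
Qed.

Lemma cycle_space_int (r : 'rV[rat]_N) : (r <= cycle_space rat e s)%MS ->
  exists k : int, k != 0 /\ exists z, one_cycle e s z /\ int_row z = k%:~R *: r.
Proof.
rewrite sub_capmx => /andP[r_anti /sub_kermxP r_closed].
have [k [k_neq0 [z z_eq]]] := clear_denominators r.
exists k; split => //; exists z; split; last first.
  by apply/rowP => j; rewrite -(enum_valK j) int_rowE z_eq mxE.
split=> d; apply: (@intr_inj rat); first by rewrite intrN !z_eq (anti_space_e _ r_anti) mulrN.
rewrite rmorph_sum /=.
by under eq_bigr do rewrite z_eq; rewrite -mulr_sumr -vertex_mxE r_closed mxE mulr0.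
Qed.

End IntegerChains.

Lemma diffmx_sub (F : fieldType) m1 m2 n (A B : 'M[F]_(m1, n)) (C : 'M[F]_(m2, n)) :
  (A <= C)%MS -> (B <= C)%MS -> (A - B <= C)%MS.
Proof. by move=> sAC sBC; apply: addmx_sub sAC _; rewrite -scaleN1r scalemx_sub. Qed.

Lemma eq_null_homologous (D : finType) (e s : D -> D) (z1 z2 : D -> int) :
  z1 =1 z2 -> null_homologous e s z1 -> null_homologous e s z2.
Proof. by move=> eq_z [w [w_phi w_bdry]]; exists w; split=> // d; rewrite -eq_z. Qed.

Section CurveSpans.
Variables (D : finType) (e s : D -> D) (g n : nat) (cs : 'I_n -> seq D) (A : 'I_g -> 'I_n -> int).
Hypotheses (A_indep : indep_in_H1 e s cs A)
  (A_max : forall A' : 'I_g.+1 -> 'I_n -> int, ~ indep_in_H1 e s cs A').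

Local Notation N := #|D|.

Definition basis_mx : 'M[rat]_(g, N) := \matrix_(i < g) int_row (comb e cs (A i)).

Lemma span_rank_relation a : exists c0 : int, exists c : 'I_g -> int, c0 != 0 /\
  null_homologous e s (fun d => c0 * comb e cs a d + \sum_(i < g) c i * comb e cs (A i) d).
Proof.
pose F (j : 'I_g.+1) := if unlift ord0 j is Some i then A i else a.
have [c [c_nh [j cj_neq0]]] : exists c : 'I_g.+1 -> int,
    null_homologous e s (fun d => \sum_(j < g.+1) c j * comb e cs (F j) d) /\
    exists j, c j != 0.
  apply: NNPP => no_rel; apply: (A_max (A' := F)) => c c_nh j.
  by apply/eqP/negPn/negP => cj_neq0; apply: no_rel; exists c; split => //; exists j.
have F_split d : \sum_(j < g.+1) c j * comb e cs (F j) d =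
    c ord0 * comb e cs a d + \sum_(i < g) c (lift ord0 i) * comb e cs (A i) d.
  by rewrite big_ord_recl /F unlift_none; congr (_ + _); apply: eq_bigr => i _; rewrite liftK.
exists (c ord0), (fun i => c (lift ord0 i)); split; last exact: eq_null_homologous F_split c_nh.
apply: contra_neq cj_neq0 => c0_eq0.
have c_lift i : c (lift ord0 i) = 0.
  apply: (A_indep (c := fun i => c (lift ord0 i))); apply: (eq_null_homologous _ c_nh) => d.
  by rewrite F_split c0_eq0 mul0r add0r.
by case: (unliftP ord0 j) => [i ->|->] //; exact: c_lift.
Qed.

Lemma comb_basis_span a : exists x : 'rV[rat]_g,
  (int_row (comb e cs a) - x *m basis_mx <= bdry_space rat e s)%MS.
Proof.
have [c0 [c [c0_neq0 rel_nh]]] := span_rank_relation a.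
have c0_unit : (c0%:~R : rat) != 0 by rewrite intr_eq0.
exists (\row_i (- (c i)%:~R / c0%:~R)).
rewrite -(scalerK c0_unit (_ - _)) scalemx_sub //.
move: (null_homologous_bdry_space rel_nh); congr (_ <= _)%MS.
rewrite int_rowD int_row_sum scalerBr; congr (_ + _).
  by apply/rowP => k; rewrite !mxE intrM.
rewrite mulmx_sum_row scaler_sumr -sumrN; apply: eq_bigr => i _.
by rewrite rowK mxE scalerA mulrC divfK // scaleNr opprK.
Qed.

Lemma comb_sub m (S : 'M[rat]_(m, N)) :
  (basis_mx <= S)%MS -> (bdry_space rat e s <= S)%MS ->
  forall a, (int_row (comb e cs a) <= S)%MS.
Proof.
move=> basis_S bdry_S a; have [x x_span] := comb_basis_span a.
rewrite -(subrK (x *m basis_mx) (int_row _)) addmx_sub //.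
  exact: submx_trans x_span bdry_S.
exact: submx_trans (submxMl _ _) basis_S.
Qed.

End CurveSpans.

Section Transversality.
Variables (D : finType) (e s : D -> D) (g n : nat) (al be : 'I_n -> seq D).
Hypotheses (eK : involutive e) (e_fp : forall d, e d != d) (s_inj : injective s)
  (connected : forall x y, connect (fun a b => (b == s a) || (b == e a)) x y)
  (D_gt0 : (0 < #|D|)%N)
  (euler : ((fcard s (mem (@predT D)) + fcard (phi e s) (mem (@predT D)) + 2 * g) * 2
            = #|D| + 4)%N)
  (spans : spans_H1 e s al be).
Variables (Aal Abe : 'I_g -> 'I_n -> int).
Hypotheses (Aal_indep : indep_in_H1 e s al Aal) (Abe_indep : indep_in_H1 e s be Abe)
  (Aal_max : forall A' : 'I_g.+1 -> 'I_n -> int, ~ indep_in_H1 e s al A')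
  (Abe_max : forall A' : 'I_g.+1 -> 'I_n -> int, ~ indep_in_H1 e s be A').

Local Notation N := #|D|.
Local Notation B := (bdry_space rat e s).
Local Notation Bal := (basis_mx e al Aal).
Local Notation Bbe := (basis_mx e be Abe).
Local Notation S := (col_mx Bal Bbe + B)%MS.

Lemma basis_sub_span : (Bal <= S)%MS /\ (Bbe <= S)%MS.
Proof. by apply/andP; rewrite -col_mx_sub addsmxSl. Qed.

Lemma comb_al_sub a : (int_row (comb e al a) <= S)%MS.
Proof. exact: (comb_sub Aal_indep Aal_max basis_sub_span.1 (addsmxSr _ _) a). Qed.

Lemma comb_be_sub b : (int_row (comb e be b) <= S)%MS.
Proof. exact: (comb_sub Abe_indep Abe_max basis_sub_span.2 (addsmxSr _ _) b). Qed.

Lemma cycle_space_sub : (cycle_space rat e s <= S)%MS.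
Proof.
apply/row_subP => i.
have [k [k_neq0 [z [z_cycle z_eq]]]] := cycle_space_int (row_sub i (cycle_space rat e s)).
have k_unit : (k%:~R : rat) != 0 by rewrite intr_eq0.
rewrite -(scalerK k_unit (row i _)) scalemx_sub // -z_eq.
have [a [b ab_nh]] := spans z_cycle.
have := null_homologous_bdry_space ab_nh; rewrite !int_rowB => z_ab.
have -> : int_row z = int_row z - int_row (comb e al a) - int_row (comb e be b) +
                     int_row (comb e be b) + int_row (comb e al a) by rewrite !subrK.
apply: addmx_sub (addmx_sub _ (comb_be_sub b)) (comb_al_sub a).
exact: submx_trans z_ab (addsmxSr _ _).
Qed.

Lemma span_coker m (M : 'M[rat]_(m, N)) :
  (M <= S)%MS -> (M *m cokermx B <= col_mx Bal Bbe *m cokermx B)%MS.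
Proof.
rewrite addsmxE => /submxP[X ->]; rewrite -(hsubmxK X) mul_row_col mulmxDl.
by rewrite -[rsubmx X *m B *m _]mulmxA mulmx_coker mulmx0 addr0 -mulmxA submxMl.
Qed.

(* The [2g] rows of [Bal] and [Bbe] span a space of dimension at least [2g] in
   rational homology, hence are independent there. *)
Lemma basis_homology_free : row_free (col_mx Bal Bbe *m cokermx B).
Proof.
have := rank_homology rat eK e_fp s_inj D_gt0 euler.
move/leq_trans/(_ (mxrankS (span_coker cycle_space_sub))).
by rewrite /row_free eqn_leq rank_leq_row mul2n -addnn.
Qed.

Lemma null_homologous_split a b :
  null_homologous e s (fun d => comb e al a d + comb e be b d) ->
  null_homologous e s (comb e al a).
Proof.
move/null_homologous_bdry_space; rewrite int_rowD => ab_bdry.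
have [xa xa_span] := comb_basis_span Aal_indep Aal_max a.
have [xb xb_span] := comb_basis_span Abe_indep Abe_max b.
have : (row_mx xa xb *m col_mx Bal Bbe <= B)%MS.
  rewrite mul_row_col.
  have -> : xa *m Bal + xb *m Bbe = int_row (comb e al a) + int_row (comb e be b)
      - (int_row (comb e al a) - xa *m Bal) - (int_row (comb e be b) - xb *m Bbe).
    by rewrite !opprB (addrAC (int_row _)) subrKC -addrA subrKC.
  exact: diffmx_sub (diffmx_sub ab_bdry xa_span) xb_span.
rewrite submxE -mulmxA (mulmx_free_eq0 _ basis_homology_free) row_mx_eq0.
case/andP => /eqP xa_eq0 _; apply: bdry_space_null_homologous => //.
by move: xa_span; rewrite xa_eq0 mul0mx subr0.
Qed.

End Transversality.

Section PeriodicDomains.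
Variables (D : finType) (e s : D -> D) (n : nat) (al be : 'I_n -> seq D).
Hypotheses (eK : involutive e) (e_fp : forall d, e d != d) (s_inj : injective s).
Hypotheses (al_simple : forall i, simple_closed_curve e s (al i))
  (al_disjoint : forall i j, i != j -> forall x y, x \in al i -> y \in al j ->
     ~~ same_vertex s x y)
  (be_simple : forall i, simple_closed_curve e s (be i))
  (be_disjoint : forall i j, i != j -> forall x y, x \in be i -> y \in be j ->
     ~~ same_vertex s x y).

Local Notation Cal := (on_curves e al).
Local Notation Cbe := (on_curves e be).

Lemma in_Pi_on_curves (cs : 'I_n -> seq D) w :
  in_Pi e s (on_curves e cs) w <-> region_const e s (on_curves e cs) w.
Proof. by apply: in_PiP => // d; exact: on_curves_e. Qed.

Lemma in_Pi_al_be w :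
  in_Pi e s (fun d => Cal d || Cbe d) w <-> region_const e s (fun d => Cal d || Cbe d) w.
Proof. by apply: in_PiP => // d; rewrite !on_curves_e. Qed.

Lemma periodic_domain_add w w1 w2 :
  in_Pi e s Cal w1 -> in_Pi e s Cbe w2 -> (forall d, w d = w1 d + w2 d) ->
  periodic_domain e s al be w.
Proof.
move=> /in_Pi_on_curves w1_const /in_Pi_on_curves w2_const w_eq; split.
  have [w1_phi w1_off] := (region_constP _ _ _ _).1 w1_const.
  have [w2_phi w2_off] := (region_constP _ _ _ _).1 w2_const.
  apply/in_Pi_al_be/region_constP; split=> [d|d]; first by rewrite !w_eq w1_phi w2_phi.
  by rewrite negb_or => /andP[nCal nCbe]; rewrite !w_eq w1_off ?w2_off.
have [a a_bdry] := region_const_bdry2 eK e_fp s_inj al_simple al_disjoint w1_const.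
have [b b_bdry] := region_const_bdry2 eK e_fp s_inj be_simple be_disjoint w2_const.
by exists a, b => d; rewrite -a_bdry -b_bdry /bdry2 !w_eq opprD addrACA.
Qed.

Lemma periodic_domain_split
    (transverse : forall a b,
       null_homologous e s (fun d => comb e al a d + comb e be b d) ->
       null_homologous e s (comb e al a))
    w :
  periodic_domain e s al be w ->
  exists w1 w2, [/\ in_Pi e s Cal w1, in_Pi e s Cbe w2 & forall d, w d = w1 d + w2 d].
Proof.
case=> /in_Pi_al_be/region_constP[w_phi _] [a [b w_bdry]].
have [W [W_phi W_bdry]] : null_homologous e s (comb e al a).
  by apply: (transverse a b); exists w; split=> // d; rewrite w_bdry.
exists W, (fun d => w d - W d); split=> [||d]; last by rewrite addrC subrK.
  by apply/in_Pi_on_curves/(bdry2_comb_region_const W_phi) => d; rewrite -W_bdry.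
apply/in_Pi_on_curves/(bdry2_comb_region_const (a := b)) => d; first by rewrite /= w_phi W_phi.
by have := w_bdry d; have := W_bdry d; rewrite /bdry2; lia.
Qed.

End PeriodicDomains.

Unset Implicit Arguments.

Theorem corollary3p2 (D : finType) (e s : D -> D) (g n : nat)
    (al be : 'I_n -> seq D) :
  is_surface e s g ->
  good_collection e s g al ->
  good_collection e s g be ->
  spans_H1 e s al be ->
  forall w : D -> int,
    periodic_domain e s al be w <->
    exists w1 w2 : D -> int,
      [/\ in_Pi e s (on_curves e al) w1,
          in_Pi e s (on_curves e be) w2
        & forall d, w d = w1 d + w2 d].
Proof.
move=> [[D_gt0 eK e_fp s_inj connected] euler].
move=> [al_simple al_disjoint [[Aal Aal_indep] Aal_max]].
move=> [be_simple be_disjoint [[Abe Abe_indep] Abe_max]] spans w.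
split=> [|[w1 [w2 [w1_Pi w2_Pi w_eq]]]].
  apply: (periodic_domain_split eK s_inj) => a b.
  exact: (null_homologous_split eK e_fp s_inj connected D_gt0 euler spans
    Aal_indep Abe_indep Aal_max Abe_max).
exact: (periodic_domain_add eK e_fp s_inj al_simple al_disjoint be_simple be_disjoint
  w1_Pi w2_Pi w_eq).
Qed.
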